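(* Let $(\mathbf C,I)$ be a finite-type based chain complex of real inner product spaces and let $M=\{\alpha\to\beta\}$ be a single $(n+1,n)$-pairing ($\alpha\in I_{n+1}$, $\beta\in I_n$, $\partial_{\beta,\alpha}$ an isomorphism). Then for all $i$, $$\dim\operatorname{Im}(\partial^M_i)^\dagger=\dim\operatorname{Im}\partial^M_i=\begin{cases}\dim\operatorname{Im}\partial_i-\dim C_\beta & i=n+1,\\ \dim\operatorname{Im}\partial_i & \text{otherwise,}\end{cases}$$ where $\partial^M$ is the boundary of the Morse complex $\mathbf C^M$ (with the restricted inner product).
   Context: Based chain complex: chain complex $(\mathbf C,\partial)$ of finite-dimensional real inner product spaces $\mathbf C_n$, $n\ge0$, with disjoint finite index sets $I_n$ and $\mathbf C_n=\bigoplus_{\sigma\in I_n}C_\sigma$; $\partial_{\tau,\sigma}=\pi_\tau\partial i_\sigma:C_\sigma\to C_\tau$. For the single pairing $M=\{\alpha\to\beta\}$, the Morse complex $\mathbf C^M$ has summands $C_\sigma$ for $\sigma\in I\setminus\{\alpha,\beta\}$ and boundary components $\partial^M_{\tau,\sigma}=\partial_{\tau,\sigma}-\partial_{\tau,\alpha}\partial_{\beta,\alpha}^{-1}\partial_{\beta,\sigma}$; it is chain homotopy equivalent to $\mathbf C$. $\dagger$ denotes adjoint. *)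

From HB Require Import structures.
From mathcomp Require Import all_boot all_order all_algebra.
Set Implicit Arguments. Unset Strict Implicit. Unset Printing Implicit Defensive.
Import Order.TTheory GRing.Theory Num.Theory.
Local Open Scope ring_scope.

(* Cells (basis indices) are 'I_m; cell s lies in degree [deg s] (so the
   index sets I_n = {s | deg s = n} are disjoint), and C_s = R^(dim s)
   (column vectors) with the standard inner product; C_n is the orthogonal
   direct sum of the C_s with deg s = n.  [bd t s] is the component
   d_{t,s} : C_s -> C_t. *)
Record based_complex (R : realFieldType) (m : nat) := BasedComplex {
  deg : 'I_m -> nat;
  cdim : 'I_m -> nat;
  bd : forall t s : 'I_m, 'M[R]_(cdim t, cdim s);
  bd_deg : forall t s, (deg t).+1 != deg s -> bd t s = 0;
  bd_bd : forall r s, \sum_(t < m) bd r t *m bd t s = 0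
}.

(* The boundary d_i : C_i -> C_{i-1}, as an endomorphism of the total space
   C = (+)_s C_s (block matrix, column blocks outside degree i zeroed).
   Its rank is dim Im d_i. *)
Definition bd_total (R : realFieldType) (m : nat) (C : based_complex R m)
  (i : nat) :=
  \mxblock_(t < m, s < m)
     (if deg C s == i then bd C t s else 0 : 'M[R]_(cdim C t, cdim C s)).

Definition morse_cells (m : nat) (a b : 'I_m) : {set 'I_m} :=
  [set s | (s != a) && (s != b)].

Definition morse_cell (m : nat) (a b : 'I_m) (k : 'I_#|morse_cells a b|)
  : 'I_m := enum_val k.

(* Morse boundary component, with [inv] the inverse of d_{b,a}:
   d^M_{t,s} = d_{t,s} - d_{t,a} d_{b,a}^{-1} d_{b,s}. *)
Definition morse_bd (R : realFieldType) (m : nat) (C : based_complex R m)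
  (a b : 'I_m) (inv : 'M[R]_(cdim C a, cdim C b)) (t s : 'I_m)
  : 'M[R]_(cdim C t, cdim C s) :=
  bd C t s - bd C t a *m inv *m bd C b s.

Definition morse_total (R : realFieldType) (m : nat) (C : based_complex R m)
  (a b : 'I_m) (inv : 'M[R]_(cdim C a, cdim C b)) (i : nat) :=
  \mxblock_(k < #|morse_cells a b|, l < #|morse_cells a b|)
    (if deg C (morse_cell l) == i
     then @morse_bd R m C a b inv (morse_cell k) (morse_cell l)
     else 0 : 'M[R]_(cdim C (morse_cell k), cdim C (morse_cell l))).

From HB Require Import structures.
From mathcomp Require Import all_boot all_order all_algebra.
Import Order.TTheory GRing.Theory Num.Theory.
Local Open Scope ring_scope.
Set Implicit Arguments. Unset Strict Implicit. Unset Printing Implicit Defensive.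

(* The Morse formula d_{t,s} - d_{t,a} d_{b,a}^-1 d_{b,s} makes sense for all
   cells and gives an operator Y_i = d_i - d_{n+1} E_a d_{b,a}^-1 P_b d_i on the
   whole of C, where E_a includes C_a and P_b projects onto C_b.  For
   i <> n+1 we have P_b d_i = 0, so Y_i = d_i; for i = n+1 the Guttman rank
   reduction formula subtracts exactly dim C_b from the rank, because
   P_b d_{n+1} E_a = d_{b,a} is invertible.  The Morse boundary d^M_i is the
   restriction of Y_i to the cells other than a and b, and it has the same
   rank: column a and row b of Y_i vanish, while d o d = 0 makes column b a
   combination of the other columns and row a a combination of the other
   rows.  Adjoints are transposes, hence have the same rank. *)

Section BlockDelta.
Variables (R : pzRingType) (m : nat) (d : 'I_m -> nat).

Definition delta_blk (t s : 'I_m) : 'M[R]_(d t, d s) :=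
  if t == s then pid_mx (d t) else 0.

Lemma delta_blk_id t : delta_blk t t = 1%:M.
Proof. by rewrite /delta_blk eqxx pid_mx_1. Qed.

Lemma delta_blk_neq t s : t != s -> delta_blk t s = 0.
Proof. by rewrite /delta_blk => /negbTE ->. Qed.

Lemma sum_delta_blk_mull (P : pred 'I_m) p t (X : forall u, 'M[R]_(d u, p)) :
  P t -> \sum_(u | P u) delta_blk t u *m X u = X t.
Proof.
move=> Pt; rewrite (bigD1 t) //= delta_blk_id mul1mx big1 ?addr0 //.
move=> u /andP[_ ut].
by rewrite delta_blk_neq ?mul0mx // eq_sym.
Qed.

Lemma sum_delta_blk_mulr (P : pred 'I_m) p s (X : forall u, 'M[R]_(p, d u)) :
  P s -> \sum_(u | P u) X u *m delta_blk u s = X s.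
Proof.
move=> Ps; rewrite (bigD1 s) //= delta_blk_id mulmx1 big1 ?addr0 //.
move=> u /andP[_ us].
by rewrite delta_blk_neq ?mulmx0.
Qed.

Definition blk_inj u : 'M[R]_(\sum_t d t, d u) := \mxcol_t delta_blk t u.
Definition blk_proj u : 'M[R]_(d u, \sum_t d t) := \mxrow_s delta_blk u s.

Lemma mul_mxblock_blk_inj (X : forall t s, 'M[R]_(d t, d s)) u :
  \mxblock_(t, s) X t s *m blk_inj u = \mxcol_t X t u.
Proof.
by rewrite mul_mxblock_mxrow; apply: eq_mxcol => t; rewrite sum_delta_blk_mulr.
Qed.

Lemma mul_blk_proj_mxblock (X : forall t s, 'M[R]_(d t, d s)) u :
  blk_proj u *m \mxblock_(t, s) X t s = \mxrow_s X u s.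
Proof.
by rewrite mul_mxrow_mxblock; apply: eq_mxrow => s; rewrite sum_delta_blk_mull.
Qed.

Lemma mul_blk_proj_mxcol p (X : forall t, 'M[R]_(d t, p)) u :
  blk_proj u *m \mxcol_t X t = X u.
Proof. by rewrite mul_mxrow_mxcol sum_delta_blk_mull. Qed.

End BlockDelta.
Arguments delta_blk {R m} d t s.
Arguments blk_inj {R m} d u.
Arguments blk_proj {R m} d u.

Lemma mxrank_principal_blocks (R : fieldType) m (d : 'I_m -> nat) (A : {set 'I_m})
    (X : forall t s, 'M[R]_(d t, d s))
    (Wc : forall u s, 'M_(d u, d s)) (Wr : forall t u, 'M_(d t, d u)) :
  (forall t s, s \notin A -> X t s = \sum_(u in A) X t u *m Wc u s) ->
  (forall t s, t \notin A -> X t s = \sum_(u in A) Wr t u *m X u s) ->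
  \rank (\mxblock_(k < #|A|, l < #|A|) X (enum_val k) (enum_val l)) =
  \rank (\mxblock_(t, s) X t s).
Proof.
move=> Xcol Xrow; set XA := \mxblock_(k, l) _; set XX := \mxblock_(t, s) _.
pose Sc : 'M[R]_(_, _) := \mxblock_(t < m, l < #|A|) delta_blk d t (enum_val l).
pose Sr : 'M[R]_(_, _) := \mxblock_(l < #|A|, t < m) delta_blk d (enum_val l) t.
pose Cm := \mxblock_(l < #|A|, s < m)
  (if s \in A then delta_blk d (enum_val l) s else Wc (enum_val l) s).
pose Rm := \mxblock_(t < m, l < #|A|)
  (if t \in A then delta_blk d t (enum_val l) else Wr t (enum_val l)).
have XA_eq : XA = Sr *m XX *m Sc.
  rewrite !mul_mxblock; apply: eq_mxblock => k l.
  under eq_bigr do rewrite sum_delta_blk_mull //.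
  by rewrite sum_delta_blk_mulr.
have XX_col : XX = XX *m Sc *m Cm.
  rewrite !mul_mxblock; apply: eq_mxblock => t s.
  under eq_bigr do rewrite sum_delta_blk_mulr //.
  rewrite -(big_enum_val
    (fun u => X t u *m (if s \in A then delta_blk d u s else Wc u s))) /=.
  by case: (boolP (s \in A)) => [sA|/Xcol]; [rewrite sum_delta_blk_mulr|].
have XX_row : XX = Rm *m (Sr *m XX).
  rewrite !mul_mxblock; apply: eq_mxblock => t s.
  under eq_bigr do rewrite sum_delta_blk_mull //.
  rewrite -(big_enum_val
    (fun u => (if t \in A then delta_blk d t u else Wr t u) *m X u s)) /=.
  by case: (boolP (t \in A)) => [tA|/Xrow]; [rewrite sum_delta_blk_mull|].
apply/eqP; rewrite eqn_leq; apply/andP; split.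
  by rewrite XA_eq; apply: leq_trans (mxrankM_maxl _ _) (mxrankM_maxr _ _).
rewrite XX_row XX_col (_ : Rm *m _ = Rm *m XA *m Cm); last by rewrite XA_eq !mulmxA.
by apply: leq_trans (mxrankM_maxl _ _) (mxrankM_maxr _ _).
Qed.

Lemma mxrank_rank_reduction (R : fieldType) (p q r1 r2 : nat)
    (Z : 'M[R]_(p, q)) (E : 'M_(q, r1)) (P : 'M_(r2, p)) (X : 'M_(r1, r2)) :
  X *m (P *m (Z *m E)) = 1%:M -> P *m (Z *m E) *m X = 1%:M ->
  \rank (Z - Z *m E *m X *m (P *m Z)) = (\rank Z - r2)%N.
Proof.
set U := Z *m E; have UZE : U = Z *m E by []; clearbody U.
set Y := Z - _ => XPU1 PUX1.
have rankU : \rank U = r2.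
  apply/eqP; rewrite eqn_leq; apply/andP; split.
    rewrite -[U]mulmx1 -XPU1 mulmxA.
    exact: leq_trans (mxrankM_maxl _ _) (rank_leq_col (U *m X)).
  rewrite -{1}(mxrank1 R r2) -PUX1.
  exact: leq_trans (mxrankM_maxl _ _) (mxrankM_maxr _ _).
have PY0 : P *m Y = 0 by rewrite /Y mulmxBr !mulmxA PUX1 mul1mx subrr.
(* Z = Y + U X P Z, and the column spaces of Y and U meet trivially because
   P Y = 0 while P U is injective. *)
have capYU : (Y^T :&: U^T)%MS = 0.
  apply/eqP; rewrite -submx0; apply/rV_subP => w.
  rewrite sub_capmx => /andP[/submxP[x ->] /submxP[y yU]].
  have yPU : y *m (P *m U)^T = 0.
    by rewrite trmx_mul mulmxA -yU -mulmxA -trmx_mul PY0 trmx0 mulmx0.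
  have y0 : y = 0 by rewrite -[y]mulmx1 -trmx1 -XPU1 trmx_mul mulmxA yPU mul0mx.
  by rewrite yU y0 mul0mx sub0mx.
have rankZ : \rank Z^T = (\rank Y^T + \rank U^T)%N.
  rewrite -mxrank_disjoint_sum //; apply/eqP; rewrite eqn_leq.
  apply/andP; split; apply: mxrankS.
    rewrite -[Z in Z^T](subrK (U *m X *m (P *m Z))) linearD /=.
    by rewrite addmx_sub_adds // !trmx_mul mulmxA submxMl.
  rewrite addsmx_sub UZE !trmx_mul submxMl andbT.
  by rewrite /Y UZE -[Z in Z - _]mulmx1 -!mulmxA -mulmxBr trmx_mul submxMl.
by rewrite !mxrank_tr rankU in rankZ; rewrite rankZ addnK.
Qed.

Section MorseComplex.
Variables (R : realFieldType) (m : nat) (C : based_complex R m).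
Local Notation d := (cdim C).
Local Notation deg := (deg C).
Local Notation bd := (bd C).
Variables (a b : 'I_m) (inv : 'M[R]_(d a, d b)) (n : nat).
Hypotheses (deg_a : deg a = n.+1) (deg_b : deg b = n).
Hypotheses (inv_bdK : inv *m bd b a = 1%:M) (bd_invK : bd b a *m inv = 1%:M).
Local Notation cells := (morse_cells a b).

Lemma morse_pair_neq : a != b.
Proof. by apply/eqP => ab; move: deg_a; rewrite ab deg_b => /n_Sn. Qed.

Lemma bd_aa : bd a a = 0.
Proof. by apply: bd_deg; rewrite deg_a gtn_eqF. Qed.

Lemma bd_bb : bd b b = 0.
Proof. by apply: bd_deg; rewrite deg_b gtn_eqF. Qed.

Lemma bd_to_a_eq0 t : deg t != n -> bd t a = 0.
Proof. by move=> dt; apply: bd_deg; rewrite deg_a eqSS. Qed.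

Lemma bd_from_a_eq0 s : deg s != n.+2 -> bd a s = 0.
Proof. by move=> ds; apply: bd_deg; rewrite deg_a eq_sym. Qed.

Lemma bd_from_b_eq0 s : deg s != n.+1 -> bd b s = 0.
Proof. by move=> ds; apply: bd_deg; rewrite deg_b eq_sym. Qed.

Lemma notin_morse_cells u : (u \notin cells) = (u == a) || (u == b).
Proof. by rewrite inE negb_and !negbK. Qed.

Lemma sum_bd_bd_morse_cells t s :
  \sum_(u in cells) bd t u *m bd u s = - (bd t a *m bd a s + bd t b *m bd b s).
Proof.
have := bd_bd C t s.
rewrite (bigD1 a) //= (bigD1 b) 1?eq_sym ?morse_pair_neq //= addrA addrC => /eqP.
rewrite addr_eq0 => /eqP <-.
by apply: eq_bigl => u; rewrite inE andbC.
Qed.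

Lemma morse_bd_to_a t : morse_bd inv t a = 0.
Proof. by rewrite /morse_bd -mulmxA inv_bdK mulmx1 subrr. Qed.

Lemma morse_bd_from_b s : morse_bd inv b s = 0.
Proof. by rewrite /morse_bd bd_invK mul1mx subrr. Qed.

Lemma sum_morse_bd_bd_a t :
  \sum_(u in cells) morse_bd inv t u *m bd u a = - (bd t b *m bd b a).
Proof.
under eq_bigr do rewrite /morse_bd mulmxBl -!mulmxA.
rewrite sumrB -!mulmx_sumr !sum_bd_bd_morse_cells.
by rewrite bd_aa bd_bb !mulmx0 !mul0mx !add0r oppr0 !mulmx0 subr0.
Qed.

Lemma sum_bd_b_morse_bd s :
  \sum_(u in cells) bd b u *m morse_bd inv u s = - (bd b a *m bd a s).
Proof.
under eq_bigr do rewrite /morse_bd mulmxBr !mulmxA.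
rewrite sumrB -!mulmx_suml !sum_bd_bd_morse_cells.
by rewrite bd_aa bd_bb !mulmx0 !mul0mx !addr0 oppr0 !mul0mx subr0.
Qed.

(* The Morse boundary formula read on all cells, a and b included;
   [morse_total inv i] is its restriction to the cells other than a and b. *)
Definition morse_blk i t s : 'M[R]_(d t, d s) :=
  if deg s == i then morse_bd inv t s else 0.

Lemma morse_blk_n_mul_bd_a t u :
  morse_blk n t u *m bd u a = morse_bd inv t u *m bd u a.
Proof. by rewrite /morse_blk; case: eqVneq => // /bd_to_a_eq0->; rewrite !mulmx0. Qed.

(* [delta_blk d b s] casts C_b to C_s when s = b and vanishes when s = a. *)
Lemma morse_blk_col i t s : s \notin cells ->
  morse_blk i t s = \sum_(u in cells)
    morse_blk i t u *m - (if i == n then bd u a *m inv *m delta_blk d b s else 0).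
Proof.
rewrite notin_morse_cells => /orP[/eqP-> | /eqP->].
  rewrite /morse_blk morse_bd_to_a if_same big1 // => u _.
  by rewrite delta_blk_neq 1?eq_sym ?morse_pair_neq // !mulmx0 if_same oppr0 mulmx0.
rewrite delta_blk_id {1}/morse_blk deg_b.
case: (eqVneq i n) => [->|ni]; last by rewrite big1 // => u _; rewrite oppr0 mulmx0.
under eq_bigr do rewrite mulmx1 mulmxN mulmxA morse_blk_n_mul_bd_a.
rewrite /morse_bd bd_bb mulmx0 subr0 sumrN -mulmx_suml sum_morse_bd_bd_a.
by rewrite mulNmx opprK -mulmxA bd_invK mulmx1.
Qed.

Lemma morse_blk_row i t s : t \notin cells ->
  morse_blk i t s = \sum_(u in cells)
    - (if i == n.+2 then delta_blk d t a *m inv *m bd b u else 0) *m morse_blk i u s.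
Proof.
rewrite notin_morse_cells => /orP[/eqP-> | /eqP->]; last first.
  rewrite /morse_blk morse_bd_from_b if_same big1 // => u _.
  by rewrite delta_blk_neq 1?eq_sym ?morse_pair_neq // !mul0mx if_same oppr0 mul0mx.
rewrite delta_blk_id /morse_blk.
case: (eqVneq (deg s) i) => [<-|dsi]; last by rewrite big1 // => u _; rewrite mulmx0.
rewrite {1}/morse_bd bd_aa !mul0mx subr0.
case: (eqVneq (deg s) n.+2) => [_|dsn]; last first.
  by rewrite bd_from_a_eq0 // big1 // => u _; rewrite oppr0 mul0mx.
under eq_bigr do rewrite mul1mx mulNmx -!mulmxA.
by rewrite sumrN -mulmx_sumr sum_bd_b_morse_bd mulmxN opprK mulmxA inv_bdK mul1mx.
Qed.

Lemma bd_total_mul_blk_inj_a : bd_total C n.+1 *m blk_inj d a = \mxcol_t bd t a.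
Proof. by rewrite mul_mxblock_blk_inj deg_a eqxx. Qed.

Lemma blk_proj_b_mul_bd_total_eq0 i :
  i != n.+1 -> blk_proj d b *m bd_total C i = 0.
Proof.
move=> ni; rewrite mul_blk_proj_mxblock -(mxrow0 (q_ := d)).
apply: eq_mxrow => s.
by case: eqP => // dsi; rewrite bd_from_b_eq0 // dsi.
Qed.

Lemma blk_proj_b_mul_bd_total_inj_a :
  blk_proj d b *m (bd_total C n.+1 *m blk_inj d a) = bd b a.
Proof. by rewrite bd_total_mul_blk_inj_a mul_blk_proj_mxcol. Qed.

Lemma morse_blk_mxblock i :
  \mxblock_(t, s) morse_blk i t s =
  bd_total C i - bd_total C n.+1 *m blk_inj d a *m inv *m (blk_proj d b *m bd_total C i).
Proof.
rewrite bd_total_mul_blk_inj_a mul_blk_proj_mxblock mxcol_mul mul_mxcol_mxrow.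
rewrite /bd_total -mxblockB; apply: eq_mxblock => t s.
by rewrite /morse_blk /morse_bd; case: ifP; rewrite ?mulmx0 ?subr0.
Qed.

Lemma mxrank_morse_total i :
  \rank (morse_total inv i) =
  if i == n.+1 then (\rank (bd_total C i) - d b)%N else \rank (bd_total C i).
Proof.
rewrite (mxrank_principal_blocks (morse_blk_col i) (morse_blk_row i)).
rewrite morse_blk_mxblock; case: eqP => [->|/eqP ni].
  by apply: mxrank_rank_reduction; rewrite blk_proj_b_mul_bd_total_inj_a.
by rewrite blk_proj_b_mul_bd_total_eq0 // mulmx0 subr0.
Qed.

End MorseComplex.

Theorem mainTheorem14 (R : realFieldType) (m : nat) (C : based_complex R m)
  (n : nat) (a b : 'I_m) (inv : 'M[R]_(cdim C a, cdim C b)) :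
  deg C a = n.+1 -> deg C b = n ->
  inv *m bd C b a = 1%:M -> bd C b a *m inv = 1%:M ->
  forall i : nat,
    \rank (morse_total inv i)^T = \rank (morse_total inv i) /\
    \rank (morse_total inv i) =
      (if i == n.+1 then (\rank (bd_total C i) - cdim C b)%N
       else \rank (bd_total C i)).
Proof.
move=> deg_a deg_b inv_bdK bd_invK i.
by split; [exact: mxrank_tr | exact: mxrank_morse_total].
Qed.
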